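(* Let $A_1,A_2$ be algebras and $k:A_1\to A_2$ an algebra epimorphism (surjective unital algebra homomorphism). Then $\dim(\mathfrak{u}_{A_2})\le\dim(\mathfrak{u}_{A_1})$.
   Context: An ''algebra'' is a real finite-dimensional unital associative algebra with underlying vector space $\mathbb{R}^n$, standard basis, elements column vectors $s=(x_1,\dots,x_n)^T$, $\mathbf{d}s=(dx_1,\dots,dx_n)^T$. An uncurling metric of $A$ is a real symmetric $n\times n$ matrix $L$ with $d\big((s^{-1})^TL\,\mathbf{d}s\big)=0$ on an open ball centered at $\mathbf{1}_A$ consisting only of units; the anti-rotor $\mathfrak{u}_A$ is the real vector space of all uncurling metrics of $A$. *)

From HB Require Import structures.
From mathcomp Require Import all_boot all_order all_algebra.
From mathcomp Require Import all_classical all_reals all_analysis.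
Set Implicit Arguments. Unset Strict Implicit. Unset Printing Implicit Defensive.
Import Order.TTheory GRing.Theory Num.Theory.
Import numFieldNormedType.Exports.
Local Open Scope classical_set_scope.
Local Open Scope ring_scope.

Record algebra (R : realType) := Algebra {
  adim : nat;
  amul : 'cV[R]_adim -> 'cV[R]_adim -> 'cV[R]_adim;
  aone : 'cV[R]_adim;
  amul_linl : forall (a : R) s t u, amul (a *: s + t) u = a *: amul s u + amul t u;
  amul_linr : forall (a : R) s t u, amul u (a *: s + t) = a *: amul u s + amul u t;
  amulA : forall s t u, amul s (amul t u) = amul (amul s t) u;
  amul1s : forall s, amul aone s = s;
  amuls1 : forall s, amul s aone = s }.

Arguments adim {R} a : rename.
Arguments amul {R} a _ _ : rename.
Arguments aone {R} a : rename.

Section Defs.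
Context {R : realType}.

Definition is_unit (A : algebra R) (s : 'cV[R]_(adim A)) : Prop :=
  exists t, amul A s t = aone A /\ amul A t s = aone A.

(* s^{-1} (the two-sided inverse; meaningful for units) *)
Definition ainv (A : algebra R) (s : 'cV[R]_(adim A)) : 'cV[R]_(adim A) :=
  xget 0 [set t | amul A s t = aone A /\ amul A t s = aone A].

Definition eball (n : nat) (c : 'cV[R]_n) (r : R) : set 'cV[R]_n :=
  [set s | \sum_i (s i 0 - c i 0) ^+ 2 < r ^+ 2].

Definition evec (n : nat) (k : 'I_n) : 'cV[R]_n := delta_mx k 0.

(* j-th coefficient of the 1-form (s^{-1})^T L ds = sum_j f_j(s) dx_j *)
Definition form_coef (A : algebra R) (L : 'M[R]_(adim A)) (j : 'I_(adim A))
  (s : 'cV[R]_(adim A)) : R :=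
  ((ainv s)^T *m L) 0 j.

(* d((s^{-1})^T L ds) = 0 at s: all partials exist and d_k f_j = d_j f_k *)
Definition closed_at (A : algebra R) (L : 'M[R]_(adim A)) (s : 'cV[R]_(adim A)) : Prop :=
  forall j k : 'I_(adim A),
    derivable (form_coef L j) s (evec k) /\
    'D_(evec k) (form_coef L j) s = 'D_(evec j) (form_coef L k) s.

Definition uncurling (A : algebra R) (L : 'M[R]_(adim A)) : Prop :=
  L^T = L /\
  exists r : R, 0 < r /\
    (forall s, eball (aone A) r s -> is_unit s) /\
    (forall s, eball (aone A) r s -> closed_at L s).

(* dim of the anti-rotor u_A (the real vector space of uncurling metrics):
   the maximal size of a linearly independent family of uncurling metrics. *)
Definition antirotor_dim (A : algebra R) : nat :=
  (\max_(d < (adim A ^ 2).+1 |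
     `[< exists S : seq 'M[R]_(adim A),
           size S = (d : nat) /\ free S /\ (forall L, L \in S -> uncurling L) >])
     (d : nat))%N.

Definition algebra_epi (A1 A2 : algebra R) (K : 'M[R]_(adim A2, adim A1)) : Prop :=
  K *m aone A1 = aone A2 /\
  (forall s t, K *m amul A1 s t = amul A2 (K *m s) (K *m t)) /\
  (forall y : 'cV[R]_(adim A2), exists x : 'cV[R]_(adim A1), K *m x = y).

End Defs.

Arguments algebra_epi {R} A1 A2 K.

From HB Require Import structures.
From mathcomp Require Import all_boot all_order all_algebra.
From mathcomp Require Import all_classical all_reals all_analysis.
From mathcomp Require Import ring lra.
Set Implicit Arguments. Unset Strict Implicit. Unset Printing Implicit Defensive.
Import Order.TTheory GRing.Theory Num.Theory.
Import numFieldNormedType.Exports.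
Local Open Scope classical_set_scope.
Local Open Scope ring_scope.

(* Since a surjective K has a right inverse, the pullback L |-> K^T L K is
   injective, so it suffices to show that it maps uncurling metrics of A2 to
   uncurling metrics of A1.  At a unit y the derivative of inversion is
   v |-> - y^-1 v y^-1, hence the 1-form (s^-1)^T L ds is closed at y exactly
   when the form (a, b) |-> (y^-1 a y^-1)^T L b is symmetric.  A unital
   multiplicative K commutes with inversion, so this form for K^T L K at s is
   the form for L at K s evaluated at (K a, K b), and symmetry is inherited.
   The units contain a ball around 1 (near 1, left multiplication is injective,
   hence bijective), and by continuity K maps a smaller ball into the ball on
   which L is closed. *)

Definition amulr (R : realType) (A : algebra R) (u s : 'cV[R]_(adim A)) := amul A s u.
Arguments amulr {R} A u s.

HB.instance Definition _ (R : realType) (A : algebra R) (u : 'cV[R]_(adim A)) :=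
  GRing.isLinear.Build R _ _ *:%R (amul A u) (fun a s t => @amul_linr R A a s t u).
HB.instance Definition _ (R : realType) (A : algebra R) (u : 'cV[R]_(adim A)) :=
  GRing.isLinear.Build R _ _ *:%R (amulr A u) (fun a s t => @amul_linl R A a s t u).

Section AlgebraLaws.
Variables (R : realType) (A : algebra R).
Implicit Types s t u x y : 'cV[R]_(adim A).

Lemma amulDl s t u : amul A (s + t) u = amul A s u + amul A t u.
Proof. exact: (linearD (amulr A u)). Qed.

Lemma amulBl s t u : amul A (s - t) u = amul A s u - amul A t u.
Proof. exact: (linearB (amulr A u)). Qed.

Lemma amulZl (a : R) s u : amul A (a *: s) u = a *: amul A s u.
Proof. exact: (linearZ_LR (amulr A u)). Qed.

Lemma amul_suml m (F : 'I_m -> 'cV[R]_(adim A)) u :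
  amul A (\sum_i F i) u = \sum_i amul A (F i) u.
Proof. exact: (linear_sum (amulr A u)). Qed.

Lemma amulBr s t u : amul A u (s - t) = amul A u s - amul A u t.
Proof. exact: linearB. Qed.

Lemma amulZr (a : R) s u : amul A u (a *: s) = a *: amul A u s.
Proof. exact: linearZ_LR. Qed.

Lemma amul_sumr m (F : 'I_m -> 'cV[R]_(adim A)) u :
  amul A u (\sum_i F i) = \sum_i amul A u (F i).
Proof. exact: linear_sum. Qed.

Lemma amulsV s : is_unit s -> amul A s (ainv s) = aone A.
Proof. by move=> us; have [] := xgetPex 0 us. Qed.

Lemma amulVs s : is_unit s -> amul A (ainv s) s = aone A.
Proof. by move=> us; have [] := xgetPex 0 us. Qed.

Lemma ainv_eq s t : amul A s t = aone A -> amul A t s = aone A -> ainv s = t.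
Proof.
move=> st ts; have us : is_unit s by exists t.
by rewrite -[ainv s]amuls1 -st amulA amulVs // amul1s.
Qed.

Lemma ainvB x y : is_unit x -> is_unit y ->
  ainv x - ainv y = amul A (amul A (ainv x) (y - x)) (ainv y).
Proof.
by move=> ux uy; rewrite amulBr amulBl amulVs // amul1s -amulA amulsV // amuls1.
Qed.

End AlgebraLaws.

Section ColumnVectors.
Variable R : realType.

Lemma colv_sum_evec n (s : 'cV[R]_n) : s = \sum_i s i 0 *: evec i.
Proof. by rewrite {1}[s]matrix_sum_delta; apply: eq_bigr => i _; rewrite big_ord1. Qed.

Lemma linear_mxE n m (f : {linear 'cV[R]_n -> 'cV[R]_m}) s :
  f s = (\matrix_(i, k) f (evec k) i 0) *m s.
Proof.
rewrite {1}(colv_sum_evec s) linear_sum; apply/matrixP => i j.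
rewrite ord1 summxE !mxE; apply: eq_bigr => k _.
by rewrite linearZ_LR !mxE mulrC.
Qed.

Definition l1norm n (s : 'cV[R]_n) : R := \sum_i `|s i 0|.

Definition mx_l1norm m n (K : 'M[R]_(m, n)) : R := \sum_i \sum_j `|K i j|.

Lemma l1norm_ge0 n (s : 'cV[R]_n) : 0 <= l1norm s.
Proof. exact: sumr_ge0. Qed.

Lemma coord_le_l1norm n (s : 'cV[R]_n) i : `|s i 0| <= l1norm s.
Proof. by rewrite /l1norm (bigD1 i) //= lerDl sumr_ge0. Qed.

Lemma l1normD n (s t : 'cV[R]_n) : l1norm (s + t) <= l1norm s + l1norm t.
Proof. by rewrite /l1norm -big_split ler_sum // => i _; rewrite mxE ler_normD. Qed.

Lemma l1normZ n (a : R) (s : 'cV[R]_n) : l1norm (a *: s) = `|a| * l1norm s.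
Proof. by rewrite /l1norm mulr_sumr; apply: eq_bigr => i _; rewrite mxE normrM. Qed.

Lemma l1normN n (s : 'cV[R]_n) : l1norm (- s) = l1norm s.
Proof. by rewrite -scaleN1r l1normZ normrN1 mul1r. Qed.

Lemma l1norm_eq0 n (s : 'cV[R]_n) : l1norm s = 0 -> s = 0.
Proof.
move=> /eqP; rewrite psumr_eq0 // => /allP s0; apply/matrixP => i j.
by rewrite ord1 mxE; apply/eqP; rewrite -normr_eq0 (implyP (s0 i (mem_index_enum i))).
Qed.

Lemma l1norm_sum n m (F : 'I_m -> 'cV[R]_n) : l1norm (\sum_i F i) <= \sum_i l1norm (F i).
Proof.
elim/big_ind2: _ => // [|a s b t le_sa le_tb].
  by rewrite /l1norm big1 // => i _; rewrite mxE normr0.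
exact: le_trans (l1normD s t) (lerD le_sa le_tb).
Qed.

Lemma l1norm_dot n (x w : 'cV[R]_n) : `|(x^T *m w) 0 0| <= l1norm x * l1norm w.
Proof.
rewrite mxE (le_trans (ler_norm_sum _ _ _)) // /l1norm mulr_suml ler_sum // => i _.
by rewrite mxE normrM ler_wpM2l ?coord_le_l1norm.
Qed.

Lemma l1norm_mulmx m n (K : 'M[R]_(m, n)) s : l1norm (K *m s) <= mx_l1norm K * l1norm s.
Proof.
rewrite /l1norm /mx_l1norm mulr_suml ler_sum // => i _.
rewrite mxE (le_trans (ler_norm_sum _ _ _)) // mulr_suml ler_sum // => j _.
by rewrite normrM ler_wpM2l ?coord_le_l1norm.
Qed.

Lemma mx_l1norm_ge0 m n (K : 'M[R]_(m, n)) : 0 <= mx_l1norm K.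
Proof. by apply: sumr_ge0 => i _; apply: sumr_ge0. Qed.

Lemma sum_sqr_le_l1norm n (s : 'cV[R]_n) : \sum_i s i 0 ^+ 2 <= l1norm s ^+ 2.
Proof.
rewrite expr2 {1}/l1norm mulr_suml ler_sum // => i _.
by rewrite -real_normK ?num_real // expr2 ler_wpM2l ?coord_le_l1norm.
Qed.

End ColumnVectors.

Section EuclideanBalls.
Variables (R : realType) (n : nat).
Implicit Types c s v w : 'cV[R]_n.

Lemma l1norm_lt_eball c s r : l1norm (s - c) < r -> eball c r s.
Proof.
move=> lt_sr; have le0 := l1norm_ge0 (s - c).
suff : \sum_i (s - c) i 0 ^+ 2 < r ^+ 2 by under eq_bigr do rewrite !mxE.
apply: le_lt_trans (sum_sqr_le_l1norm _) _.
by rewrite ltr_pXn2r // nnegrE (le_trans le0 (ltW lt_sr)).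
Qed.

Lemma eball_l1norm_lt c e : 0 < e ->
  exists2 r, 0 < r & forall s, eball c r s -> l1norm (s - c) < e.
Proof.
move=> e0; have n1 : 0 < n%:R + 1 :> R by rewrite ltr_wpDl.
exists (e / (n%:R + 1)) => [|s]; first by rewrite divr_gt0.
set r := e / _ => cs_r.
have r0 : 0 < r by rewrite divr_gt0.
have coord_lt i : `|(s - c) i 0| < r.
  rewrite -(ltr_pXn2r (_ : 0 < 2)%N) ?nnegrE ?normr_ge0 ?(ltW r0) // real_normK ?num_real //.
  apply: le_lt_trans cs_r; rewrite (bigD1 i) //= !mxE lerDl.
  by apply: sumr_ge0 => j _; apply: sqr_ge0.
have le_nr : l1norm (s - c) <= n%:R * r.
  have -> : n%:R * r = \sum_(i < n) r by rewrite sumr_const card_ord mulr_natl.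
  by apply: ler_sum => i _; apply: ltW.
have : n%:R * r < e by rewrite /r mulrA ltr_pdivrMr //; nra.
lra.
Qed.

Lemma eball_open c s r : eball c r s ->
  exists2 d, 0 < d & forall w, l1norm w < d -> eball c r (s + w).
Proof.
rewrite /eball /=; set q := \sum_i _ => q_lt.
set a := l1norm (s - c); have a0 : 0 <= a := l1norm_ge0 _.
set d := (r ^+ 2 - q) / (2 * a + 1).
have d0 : 0 < d by rewrite divr_gt0 ?subr_gt0 //; lra.
exists (Num.min 1 d) => [|w]; first by rewrite lt_min ltr01 d0.
rewrite lt_min => /andP[w1 wd].
have -> : \sum_i ((s + w) i 0 - c i 0) ^+ 2 =
    q + 2 * ((s - c)^T *m w) 0 0 + \sum_i w i 0 ^+ 2.
  rewrite /q [((s - c)^T *m w) 0 0]mxE mulr_sumr -!big_split /=.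
  by apply: eq_bigr => i _; rewrite !mxE; ring.
have := l1norm_dot (s - c) w; have := sum_sqr_le_l1norm w; have := l1norm_ge0 w.
have := ler_norm (((s - c)^T *m w) 0 0).
have : l1norm w * (2 * a + 1) < r ^+ 2 - q by rewrite -ltr_pdivlMr //; lra.
rewrite -/a; nra.
Qed.

Lemma eball_line c s v r : eball c r s ->
  \forall h \near (0 : R), eball c r (h *: v + s).
Proof.
move=> /eball_open[d d0 ball_d].
have v1 : 0 < l1norm v + 1 by have := l1norm_ge0 v; lra.
apply: filterS (nbhs0_lt (divr_gt0 d0 v1)) => h.
rewrite ltr_pdivlMr // => hv; rewrite addrC; apply: ball_d; rewrite l1normZ.
by have := normr_ge0 h; have := l1norm_ge0 v; nra.
Qed.

End EuclideanBalls.

Section UnitsNearOne.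
Variables (R : realType) (A : algebra R).
Implicit Types s t u : 'cV[R]_(adim A).

Definition amul_l1bound : R := \sum_i \sum_j l1norm (amul A (evec i) (evec j)).

Lemma amul_l1bound_ge0 : 0 <= amul_l1bound.
Proof. by apply: sumr_ge0 => i _; apply: sumr_ge0 => j _; apply: l1norm_ge0. Qed.

Lemma l1norm_amul u t : l1norm (amul A u t) <= amul_l1bound * l1norm u * l1norm t.
Proof.
rewrite {1}(colv_sum_evec u) amul_suml (le_trans (l1norm_sum _)) //.
rewrite /amul_l1bound -mulrA mulr_suml ler_sum // => i _.
rewrite amulZl l1normZ {1}(colv_sum_evec t) amul_sumr.
rewrite (le_trans (ler_wpM2l (normr_ge0 _) (l1norm_sum _))) //.
rewrite mulr_suml mulr_sumr ler_sum // => j _.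
rewrite amulZr l1normZ.
have := ler_pM (normr_ge0 _) (normr_ge0 _) (coord_le_l1norm u i) (coord_le_l1norm t j).
have := l1norm_ge0 (amul A (evec i) (evec j)); nra.
Qed.

Lemma unit_near1 s : amul_l1bound * l1norm (s - aone A) < 1 -> is_unit s.
Proof.
move=> small.
have ker0 t : amul A s t = 0 -> t = 0.
  rewrite -[s](subrK (aone A)) amulDl amul1s => /eqP; rewrite addr_eq0 => /eqP st.
  apply: l1norm_eq0; apply/eqP; rewrite eq_le l1norm_ge0 andbT.
  have := l1norm_amul (s - aone A) t; rewrite st l1normN.
  have := l1norm_ge0 t; have := l1norm_ge0 (s - aone A); nra.
have inj : injective (amul A s).
  by move=> t1 t2 e; apply/eqP; rewrite -subr_eq0; apply/eqP/ker0; rewrite amulBr e subrr.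
have /lker0P ker_s : injective (linfun (amul A s)).
  by move=> t1 t2; rewrite !lfunE; apply: inj.
have /memv_imgP[t _] : aone A \in limg (linfun (amul A s)).
  by rewrite lker0_limgf // memvf.
rewrite lfunE /= => st; exists t; split=> //.
by apply: inj; rewrite amulA -st amul1s amuls1.
Qed.

End UnitsNearOne.

Lemma cvg_dnbhs0_linear_bound (R : realType) (g : R -> R) (l C : R) :
  (\forall h \near 0^', `|g h - l| <= C * `|h|) -> g @ 0^' --> l.
Proof.
move=> near_gC; apply/cvgrPdist_lt => e e0.
have C1 : 0 < `|C| + 1 by have := normr_ge0 C; lra.
near=> h; rewrite distrC.
have gC : `|g h - l| <= C * `|h| by near: h.
have : `|h| < e / (`|C| + 1) by near: h; apply: dnbhs0_lt; rewrite divr_gt0.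
rewrite ltr_pdivlMr //; have := ler_norm C; have := normr_ge0 h; nra.
Unshelve. all: by end_near.
Qed.

Section InverseDerivative.
Variables (R : realType) (A : algebra R).
Implicit Types v w x y : 'cV[R]_(adim A).

Lemma l1norm_ainvB x y : is_unit x -> is_unit y ->
  2 * (amul_l1bound A * l1norm (amul A (ainv y) (x - y))) <= 1 ->
  l1norm (ainv x - ainv y) <=
    2 * (amul_l1bound A * l1norm (amul A (ainv y) (x - y))) * l1norm (ainv y).
Proof.
move=> ux uy; set b := amul_l1bound A * _ => b_small.
have b0 : 0 <= b by rewrite mulr_ge0 ?amul_l1bound_ge0 ?l1norm_ge0.
have le_diff : l1norm (ainv x - ainv y) <= b * l1norm (ainv x).
  by rewrite -opprB ainvB // l1normN; apply: l1norm_amul.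
have le_x : l1norm (ainv x) <= l1norm (ainv y) + l1norm (ainv x - ainv y).
  by rewrite addrC -{1}[ainv x](subrK (ainv y)) l1normD.
have := l1norm_ge0 (ainv x); have := l1norm_ge0 (ainv y) => y0 x0.
have le_x2 : l1norm (ainv x) <= 2 * l1norm (ainv y) by nra.
nra.
Qed.

Lemma derive_ainv_dot y v w : is_unit y ->
  (\forall h \near 0, is_unit (h *: v + y)) ->
  derivable (fun x => ((ainv x)^T *m w) 0 0) y v /\
  'D_v (fun x => ((ainv x)^T *m w) 0 0) y =
    - ((amul A (amul A (ainv y) v) (ainv y))^T *m w) 0 0.
Proof.
move=> uy near_u; set f := fun x => _.
set yi := ainv y; set P := amul A yi v; set b := amul_l1bound A * l1norm P.
have b0 : 0 <= b by rewrite mulr_ge0 ?amul_l1bound_ge0 ?l1norm_ge0.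
have dotB (a c : 'cV[R]_(adim A)) : ((a - c)^T *m w) 0 0 = (a^T *m w) 0 0 - (c^T *m w) 0 0.
  by rewrite linearB /= mulmxBl !mxE.
suff dq : (fun h => h^-1 *: ((f \o shift y) (h *: v) - f y)) @ 0^' -->
    - ((amul A P yi)^T *m w) 0 0.
  by split; [exact: cvgP dq | exact: cvg_lim dq].
apply: (@cvg_dnbhs0_linear_bound _ _ _ (2 * b ^+ 2 * l1norm yi * l1norm w)).
have b1 : 0 < 2 * b + 1 by lra.
near=> h.
have ux : is_unit (h *: v + y) by near: h; exact: nbhs_dnbhs near_u.
have h0 : h != 0 by near: h; exact: nbhs_dnbhs_neq.
have hb : 2 * (`|h| * b) <= 1.
  have : `|h| < (2 * b + 1)^-1 by near: h; apply: dnbhs0_lt; rewrite invr_gt0.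
  by rewrite -div1r ltr_pdivlMr //; have := normr_ge0 h; nra.
set x := h *: v + y.
have diff : ainv x - yi = - (h *: amul A P (ainv x)).
  by rewrite -opprB ainvB // /x addrK amulZr amulZl.
have l1_diff : l1norm (ainv x - yi) <= 2 * (`|h| * b) * l1norm yi.
  move: (l1norm_ainvB ux uy).
  by rewrite /x addrK amulZr l1normZ (mulrCA (amul_l1bound A)); apply.
rewrite /= /f -/x -/yi -dotB diff.
have -> : h^-1 *: ((- (h *: amul A P (ainv x)))^T *m w) 0 0 =
    - ((amul A P (ainv x))^T *m w) 0 0.
  rewrite -scaleNr linearZ /= -scalemxAl mxE -[h^-1 *: _]/(h^-1 * _).
  by rewrite mulNr mulrN mulrA mulVf // mul1r.
rewrite opprK addrC -dotB -amulBr (le_trans (l1norm_dot _ _)) //.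
have := l1norm_amul P (yi - ainv x); rewrite -opprB l1normN => le_P.
have -> : 2 * b ^+ 2 * l1norm yi * l1norm w * `|h| =
    b * (2 * (`|h| * b) * l1norm yi) * l1norm w by ring.
apply: (ler_wpM2r (l1norm_ge0 w)); exact: le_trans le_P (ler_wpM2l b0 l1_diff).
Unshelve. all: by end_near.
Qed.

End InverseDerivative.

Section SandwichForm.
Variables (R : realType) (A : algebra R).
Implicit Types (L : 'M[R]_(adim A)) (y a b : 'cV[R]_(adim A)).

Definition sandwich_form L y a b : R :=
  ((amul A (amul A (ainv y) a) (ainv y))^T *m (L *m b)) 0 0.

Lemma sandwich_formC L y :
  (forall j k, sandwich_form L y (evec k) (evec j) = sandwich_form L y (evec j) (evec k)) ->
  forall a b, sandwich_form L y a b = sandwich_form L y b a.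
Proof.
move=> sym_evec.
set M := \matrix_(i, k) amul A (amul A (ainv y) (evec k)) (ainv y) i 0.
have ME a : amul A (amul A (ainv y) a) (ainv y) = M *m a.
  exact: (linear_mxE (amulr A (ainv y) \o amul A (ainv y))).
set Q := M^T *m L.
have formE a b : sandwich_form L y a b = (a^T *m Q *m b) 0 0.
  by rewrite /sandwich_form ME trmx_mul !mulmxA.
have form_evec k j : sandwich_form L y (evec k) (evec j) = Q k j.
  by rewrite formE /evec trmx_delta -rowE -colE !mxE.
have Q_sym : Q^T = Q.
  by apply/matrixP => k j; rewrite mxE -!form_evec sym_evec.
move=> a b; rewrite !formE.
transitivity ((a^T *m Q *m b)^T 0 0); first by rewrite [RHS]mxE.
by rewrite trmx_mul (trmx_mul a^T Q) trmxK Q_sym mulmxA.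
Qed.

Lemma form_coefE L j : form_coef L j = fun x => ((ainv x)^T *m (L *m evec j)) 0 0.
Proof. by apply: funext => x; rewrite /form_coef mulmxA /evec -colE [RHS]mxE. Qed.

Lemma derive_form_coef L y j k : is_unit y ->
  (\forall h \near 0, is_unit (h *: evec k + y)) ->
  derivable (form_coef L j) y (evec k) /\
  'D_(evec k) (form_coef L j) y = - sandwich_form L y (evec k) (evec j).
Proof. by move=> uy near_u; rewrite form_coefE; apply: derive_ainv_dot. Qed.

Lemma closed_at_sandwichP L y : is_unit y ->
  (forall v, \forall h \near 0, is_unit (h *: v + y)) ->
  closed_at L y <->
  forall j k, sandwich_form L y (evec k) (evec j) = sandwich_form L y (evec j) (evec k).
Proof.
move=> uy near_u.
have D j k : 'D_(evec k) (form_coef L j) y = - sandwich_form L y (evec k) (evec j).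
  exact: (derive_form_coef L j uy (near_u _)).2.
split => [closed j k | sym_evec j k].
  by have [_] := closed j k; rewrite !D => /oppr_inj.
split; first exact: (derive_form_coef L j uy (near_u _)).1.
by rewrite !D sym_evec.
Qed.

End SandwichForm.

Section Epimorphism.
Variables (R : realType) (A1 A2 : algebra R) (K : 'M[R]_(adim A2, adim A1)).
Hypothesis epiK : algebra_epi A1 A2 K.

Lemma epi_unit s : is_unit s -> is_unit (K *m s).
Proof.
have [K1 [KM _]] := epiK => us; exists (K *m ainv s).
by rewrite -!KM amulsV ?amulVs.
Qed.

Lemma epi_ainv s : is_unit s -> ainv (K *m s) = K *m ainv s.
Proof. by have [K1 [KM _]] := epiK => us; apply: ainv_eq; rewrite -KM ?amulsV ?amulVs. Qed.

Lemma sandwich_form_pullback L s a b : is_unit s ->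
  sandwich_form (K^T *m L *m K) s a b = sandwich_form L (K *m s) (K *m a) (K *m b).
Proof.
have [_ [KM _]] := epiK => us.
by rewrite /sandwich_form epi_ainv // -!KM -!mulmxA trmx_mul !mulmxA.
Qed.

Lemma epi_eball r : 0 < r -> exists2 r1, 0 < r1 &
  forall s, eball (aone A1) r1 s -> is_unit s /\ eball (aone A2) r (K *m s).
Proof.
move=> r0; have [K1 _] := epiK.
have c0 := amul_l1bound_ge0 A1; have k0 := mx_l1norm_ge0 K.
have [|r1 r10 small] := eball_l1norm_lt (aone A1)
  (_ : 0 < Num.min (amul_l1bound A1 + 1)^-1 (r / (mx_l1norm K + 1))).
  by rewrite lt_min invr_gt0 divr_gt0 //=; lra.
exists r1 => // s /small; rewrite lt_min => /andP[].
have := l1norm_ge0 (s - aone A1).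
rewrite -div1r !ltr_pdivlMr ?ltr_wpDl // => s0 s_c s_K; split.
  by apply: unit_near1; nra.
apply: l1norm_lt_eball; rewrite -K1 -mulmxBr.
by apply: le_lt_trans (l1norm_mulmx _ _) _; nra.
Qed.

Lemma uncurling_pullback L : uncurling L -> uncurling (K^T *m L *m K).
Proof.
move=> [L_sym [r [r0 [units2 closed2]]]].
split; first by rewrite !trmx_mul trmxK L_sym mulmxA.
have [r1 r10 ball1] := epi_eball r0.
exists r1; split=> //; split=> [s /ball1[] // | s s_ball].
have [us Ks_ball] := ball1 s s_ball.
have near_units1 v : \forall h \near 0, is_unit (h *: v + s).
  by apply: filterS (eball_line v s_ball) => h /ball1[].
have near_units2 v : \forall h \near 0, is_unit (h *: v + K *m s).
  by apply: filterS (eball_line v Ks_ball) => h /units2.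
have sym2 := (closed_at_sandwichP L (epi_unit us) near_units2).1 (closed2 _ Ks_ball).
apply/(closed_at_sandwichP _ us near_units1) => j k.
by rewrite !sandwich_form_pullback //; apply: sandwich_formC.
Qed.

End Epimorphism.

Lemma free_map_inj (F : fieldType) (U V : vectType F) (f : {linear U -> V}) (X : seq U) :
  injective f -> free X -> free (map f X).
Proof.
move=> injf freeX.
have /lker0P kf : injective (linfun f) by move=> x y; rewrite !lfunE; apply: injf.
have /limg_basis_of : basis_of <<X>> X by rewrite /basis_of eqxx.
move=> /(_ _ (linfun f)); rewrite (eqP kf) capv0 (eq_map (lfunE f)) => /(_ erefl).
by case/andP.
Qed.

Lemma free_size_le_dim (F : fieldType) (V : vectType F) (X : seq V) :
  free X -> (size X <= dim V)%N.
Proof. by move/eqP <-; rewrite -dimvf dimvS ?subvf. Qed.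

Lemma surj_mulmx_rinv (F : pzRingType) m n (K : 'M[F]_(m, n)) :
  (forall y : 'cV[F]_m, exists x, K *m x = y) -> exists J : 'M[F]_(n, m), K *m J = 1%:M.
Proof.
move=> surjK; have [f Kf] := boolp.choice (fun j : 'I_m => surjK (delta_mx j 0)).
exists (\matrix_(i, j) f j i 0); apply/matrixP => i j.
have := congr1 (fun M : 'cV[F]_m => M i 0) (Kf j); rewrite !mxE /= eqxx andbT => <-.
by apply: eq_bigr => l _; rewrite !mxE.
Qed.

Lemma trmx_mulmx_inj (F : comPzRingType) m n (K : 'M[F]_(m, n)) (J : 'M[F]_(n, m)) :
  K *m J = 1%:M -> injective (fun L : 'M[F]_m => K^T *m L *m K).
Proof.
move=> KJ L1 L2 /(congr1 (fun X => J^T *m X *m J)) /=.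
by rewrite !mulmxA -!trmx_mul KJ trmx1 !mul1mx -!mulmxA KJ !mulmx1.
Qed.

Theorem corollary6p2 (R : realType) (A1 A2 : algebra R)
  (K : 'M[R]_(adim A2, adim A1)) :
  algebra_epi A1 A2 K -> (antirotor_dim A2 <= antirotor_dim A1)%N.
Proof.
move=> epiK; have [_ [_ /surj_mulmx_rinv[J KJ]]] := epiK.
set pullback := mulmxr K \o mulmx K^T.
apply/bigmax_leqP => d /asboolP[S [<- [freeS uncS]]].
have free1 : free (map pullback S).
  by apply: (@free_map_inj _ _ _ pullback _ _ freeS); apply: trmx_mulmx_inj KJ.
have size1 : (size S < (adim A1 ^ 2).+1)%N.
  by rewrite ltnS -mulnn -(size_map pullback); apply: free_size_le_dim free1.
apply: (@leq_bigmax_cond _ _ (fun d : 'I__ => nat_of_ord d) (Ordinal size1)).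
apply/asboolP; exists (map pullback S); split; first by rewrite size_map.
by split=> // _ /mapP[L SL ->]; apply: uncurling_pullback (uncS L SL).
Qed.
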